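(* Let $L$ be the lattice of IHS manifolds of a given deformation type, $M$ a lattice of signature $(1,t)$ with a primitive embedding $j\colon M\hookrightarrow L$, and $N=j(M)^\perp$. If $\mathrm{Mo}^2(L)\supset\tilde{SO}^+(L)$, then $\Gamma_{M,j}$ is an arithmetic subgroup of $O(N)$.
   Context: $\mathrm{Mo}^2(L)=\phi\,\mathrm{Mo}^2(X)\,\phi^{-1}\subset O(L)$ is the monodromy group of the IHS manifolds transported to $L$ by a marking $\phi$. $\mathrm{Mo}^2(M,j)=\{g\in\mathrm{Mo}^2(L):g|_{j(M)}=\mathrm{id}\}$ and $\Gamma_{M,j}\subset O(N)$ is its image under restriction to $N$. For a lattice $\Lambda$ with discriminant group $A_\Lambda=\Lambda^*/\Lambda$: $\tilde O^+(\Lambda)=\{g\in O(\Lambda): g|_{A_\Lambda}=\mathrm{id}$, real spinor norm of $g$ equal to $1\}$, where the real spinor norm of $g=\rho_{v_1}\cdots\rho_{v_m}$ (reflections, $v_i\in\Lambda_{\mathbb R}$) is $\prod(-v_i^2/2)$ modulo squares; $\tilde{SO}^+(\Lambda)=\{g\in\tilde O^+(\Lambda):\det g=1\}$. *)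

From HB Require Import structures.
From mathcomp Require Import all_boot all_order all_algebra.
From mathcomp Require Import Rstruct.
From Stdlib Require Rdefinitions.
Notation R := Rdefinitions.R.
Set Implicit Arguments. Unset Strict Implicit. Unset Printing Implicit Defensive.
Import Order.TTheory GRing.Theory Num.Theory.
Local Open Scope ring_scope.

(* A lattice of rank n is Z^n (row vectors) with integral symmetric Gram
   matrix B; b(x,y) = x *m B *m y^T.  Elements of O(L) are integer matrices
   acting on the right on row vectors: x |-> x *m g. *)

Definition mxR {m n} (A : 'M[int]_(m, n)) : 'M[R]_(m, n) := map_mx (fun z : int => z%:~R) A.
Definition mxQ {m n} (A : 'M[int]_(m, n)) : 'M[rat]_(m, n) := map_mx (fun z : int => z%:~R) A.

Definition has_signature {m} (C : 'M[R]_m) (p q : nat) : Prop :=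
  (p + q = m)%N /\
  exists P : 'M[R]_m, P \in unitmx /\
    P *m C *m P^T = diag_mx (\row_(i < m) (if (val i < p)%N then 1 else -1)).

Definition is_lattice_gram {m} (C : 'M[int]_m) : Prop := C^T = C.

Definition even_gram {m} (C : 'M[int]_m) : Prop := forall i, ~~ odd `|C i i|%N.

Definition isom_L {n} (B : 'M[int]_n) (g : 'M[int]_n) : Prop :=
  g \in unitmx /\ g *m B *m g^T = B.

Definition is_integral {n} (x : 'rV[rat]_n) : Prop :=
  forall i, x 0 i \is a Num.int.

(* g acts trivially on A_L = L^* / L, where L^* = {x in L_Q | x B in Z^n} *)
Definition acts_trivially_on_disc {n} (B : 'M[int]_n) (g : 'M[int]_n) : Prop :=
  forall x : 'rV[rat]_n, is_integral (x *m mxQ B) -> is_integral (x *m mxQ g - x).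

(* reflection rho_v(x) = x - 2 b(x,v)/b(v,v) v, as a matrix on row vectors of L_R *)
Definition qR {n} (B : 'M[int]_n) (v : 'rV[R]_n) : R := (v *m mxR B *m v^T) 0 0.
Definition reflmx {n} (B : 'M[int]_n) (v : 'rV[R]_n) : 'M[R]_n :=
  1%:M - (2 / qR B v) *: (mxR B *m v^T *m v).

(* matrix of rho_{v1} o ... o rho_{vm} (right action: composition reverses) *)
Fixpoint refl_comp {n} (B : 'M[int]_n) (vs : seq 'rV[R]_n) : 'M[R]_n :=
  match vs with
  | [::] => 1%:M
  | v :: vs' => refl_comp B vs' *m reflmx B v
  end.

(* real spinor norm of g equal to 1 (mod squares: the product is > 0) *)
Definition real_spinor_norm_one {n} (B : 'M[int]_n) (g : 'M[int]_n) : Prop :=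
  exists vs : seq 'rV[R]_n,
    all (fun v => qR B v != 0) vs /\ refl_comp B vs = mxR g /\
    0 < \prod_(v <- vs) (- qR B v / 2).

Definition tildeOplus {n} (B : 'M[int]_n) (g : 'M[int]_n) : Prop :=
  isom_L B g /\ acts_trivially_on_disc B g /\ real_spinor_norm_one B g.

Definition tildeSOplus {n} (B : 'M[int]_n) (g : 'M[int]_n) : Prop :=
  tildeOplus B g /\ \det g = 1.

Definition subgroup_OL {n} (B : 'M[int]_n) (G : 'M[int]_n -> Prop) : Prop :=
  (forall g, G g -> isom_L B g) /\ G 1%:M /\
  (forall g h, G g -> G h -> G (g *m h)) /\
  (forall g, G g -> G (invmx g)).

(* primitive embedding j : M -> L given by the matrix J (rows = images of a basis of M) *)
Definition primitive_embedding {m n} (C : 'M[int]_m) (B : 'M[int]_n) (J : 'M[int]_(m, n)) : Prop :=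
  J *m B *m J^T = C /\
  (forall (x : 'rV[int]_n) (k : int), k != 0 ->
     (exists y : 'rV[int]_m, k *: x = y *m J) -> exists y : 'rV[int]_m, x = y *m J).

Definition inN {m n} (B : 'M[int]_n) (J : 'M[int]_(m, n)) (x : 'rV[int]_n) : Prop :=
  x *m B *m J^T = 0.

(* O(N): form-preserving Z-linear bijections of N (maps L -> L considered on N) *)
Definition isom_N {m n} (B : 'M[int]_n) (J : 'M[int]_(m, n)) (f : 'rV[int]_n -> 'rV[int]_n) : Prop :=
  (forall x, inN B J x -> inN B J (f x)) /\
  (forall x y, inN B J x -> inN B J y -> f (x + y) = f x + f y) /\
  (forall x y, inN B J x -> inN B J y -> f x *m B *m (f y)^T = x *m B *m y^T) /\
  (forall y, inN B J y -> exists2 x, inN B J x & f x = y).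

Definition Gamma {m n} (B : 'M[int]_n) (J : 'M[int]_(m, n)) (G : 'M[int]_n -> Prop)
  (f : 'rV[int]_n -> 'rV[int]_n) : Prop :=
  exists g, G g /\ J *m g = J /\ forall x, inN B J x -> f x = x *m g.

(* arithmetic subgroup of O(N): a subgroup of O(N) of finite index
   (for subgroups of O(N), commensurability with O(N) = finite index) *)
Definition arithmetic_subgroup_ON {m n} (B : 'M[int]_n) (J : 'M[int]_(m, n))
  (Gam : ('rV[int]_n -> 'rV[int]_n) -> Prop) : Prop :=
  (forall f, Gam f -> isom_N B J f) /\
  exists reps : seq ('rV[int]_n -> 'rV[int]_n),
    (forall r, List.In r reps -> isom_N B J r) /\
    forall h, isom_N B J h ->
      exists r, List.In r reps /\ exists2 f, Gam f &
        forall x, inN B J x -> h x = r (f x).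

From HB Require Import structures.
From mathcomp Require Import all_boot all_order all_algebra.
From mathcomp Require Import Rstruct.
From Stdlib Require Import Classical ClassicalEpsilon.
From mathcomp Require Import ring.
Set Implicit Arguments. Unset Strict Implicit. Unset Printing Implicit Defensive.
Import Order.TTheory GRing.Theory Num.Theory.
Local Open Scope ring_scope.

(* The isometry of L_Q that is h on N and the identity on j(M), multiplied
   by D = det C to clear denominators, is an integer matrix G_h with
   G_h B G_h^T = D^2 B.  The key of h consists of the residues of G_h modulo
   m = (D det B)^2, the sign of det G_h and the sign of the real spinor
   norm of G_h / D, written as a product of reflections by Cartan-Dieudonne.
   If h1 and h2 have the same key, g = G_h2 G_h1^-1 is integral (c G_h1^-1
   is integral for c = D^2 det B, and c divides m), fixes j(M), has
   determinant 1, spinor norm 1, and g - 1 is divisible by det B, so g acts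
   trivially on the discriminant group.  Hence g lies in \tilde{SO}^+(L),
   so in Mo^2(L), and h2 = h1 o g on N: the finitely many keys give
   finitely many cosets. *)

Lemma eq_mx_mulrv (T : pzSemiRingType) m n (M N : 'M[T]_(m, n)) :
  (forall x : 'rV_m, x *m M = x *m N) -> M = N.
Proof. by move=> eqMN; apply/row_matrixP => i; rewrite !rowE eqMN. Qed.

Lemma eq_mx_bilin (T : comPzRingType) m n (M N : 'M[T]_(m, n)) :
  (forall (x : 'rV_m) (y : 'rV_n), x *m M *m y^T = x *m N *m y^T) -> M = N.
Proof.
move=> eqMN; apply: eq_mx_mulrv => x; apply/rowP => j.
have := eqMN x (delta_mx 0 j).
by rewrite trmx_delta -!colE => /matrixP /(_ 0 0); rewrite !mxE.
Qed.

Lemma mulmx_trmx_form (T : comPzRingType) n p1 p2 (X1 : 'M[T]_(p1, n))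
    (X2 : 'M[T]_(p2, n)) (G A : 'M[T]_n) :
  (X1 *m G) *m A *m (X2 *m G)^T = X1 *m (G *m A *m G^T) *m X2^T.
Proof. by rewrite trmx_mul !mulmxA. Qed.

Lemma mul_gt0_same_sign (T : realDomainType) (x y : T) :
  x != 0 -> y != 0 -> (0 < x) = (0 < y) -> 0 < x * y.
Proof.
case: (ltrgt0P x) => [xgt0|xlt0|->] //; case: (ltrgt0P y) => [ygt0|ylt0|->] //.
- by move=> *; exact: mulr_gt0.
- by move=> *; rewrite nmulr_rgt0.
Qed.

Lemma eq_sqr_same_sign (T : realDomainType) (x y : T) :
  x != 0 -> x ^+ 2 = y ^+ 2 -> (0 < x) = (0 < y) -> x = y.
Proof.
move=> x0 /eqP; rewrite eqf_sqr => /orP[/eqP //|/eqP xE].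
by move: x0; rewrite xE oppr_eq0 oppr_gt0; case: ltrgt0P.
Qed.

Lemma mx_eqmodz m n (d : int) (A A' : 'M[int]_(m, n)) :
  (forall i j, (A' i j = A i j %[mod d])%Z) -> exists Y, A' = A + d *: Y.
Proof.
move=> eqAA'; exists (\matrix_(i, j) ((A' i j - A i j) %/ d)%Z).
apply/matrixP => i j; rewrite !mxE mulrC divzK; first by rewrite addrC subrK.
by rewrite -eqz_mod_dvd; apply/eqP.
Qed.

Lemma mxRM m n p (A : 'M[int]_(m, n)) (A' : 'M[int]_(n, p)) :
  mxR (A *m A') = mxR A *m mxR A'.
Proof. by rewrite /mxR map_mxM. Qed.
Lemma mxRZ m n (a : int) (A : 'M[int]_(m, n)) : mxR (a *: A) = a%:~R *: mxR A.
Proof. by rewrite /mxR map_mxZ. Qed.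
Lemma mxR_trmx m n (A : 'M[int]_(m, n)) : mxR A^T = (mxR A)^T.
Proof. by rewrite /mxR map_trmx. Qed.
Lemma mxQM m n p (A : 'M[int]_(m, n)) (A' : 'M[int]_(n, p)) :
  mxQ (A *m A') = mxQ A *m mxQ A'.
Proof. by rewrite /mxQ map_mxM. Qed.
Lemma mxQD m n (A A' : 'M[int]_(m, n)) : mxQ (A + A') = mxQ A + mxQ A'.
Proof. by rewrite /mxQ map_mxD. Qed.
Lemma mxQ1 n : mxQ (1%:M : 'M[int]_n) = 1%:M.
Proof. by rewrite /mxQ map_mx1. Qed.

Lemma signature_det_neq0 n (A : 'M[int]_n) p q : has_signature (mxR A) p q -> \det A != 0.
Proof.
case=> _ [P [_ /(congr1 determinant)]].
rewrite det_diag !det_mulmx det_tr /mxR det_map_mx => detE.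
apply/eqP => detA0; move: detE; rewrite detA0 mulr0 mul0r => /esym /eqP.
apply/negP; rewrite prodf_seq_neq0; apply/allP => i _ /=; rewrite mxE.
by case: ifP => _; rewrite ?oppr_eq0 oner_eq0.
Qed.

Lemma mulmx_scalarC_int n (A X : 'M[int]_n) (c : int) : c != 0 ->
  A *m X = c%:M -> X *m A = c%:M.
Proof.
move=> c0 AX; have cQ : (c%:~R : rat) != 0 by rewrite intr_eq0.
have cM : (c%:~R : rat)%:M = mxQ (c%:M : 'M_n) by rewrite /mxQ map_scalar_mx.
have AXQ : mxQ A *m ((c%:~R)^-1 *: mxQ X) = 1%:M.
  by rewrite -scalemxAr -mxQM AX -cM scale_scalar_mx mulVf.
have := mulmx1C AXQ; rewrite -scalemxAl -mxQM => /(congr1 ( *:%R (c%:~R : rat))).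
rewrite scalerA mulfV // scale1r scale_scalar_mx mulr1 cM => /matrixP XAQ.
by apply/matrixP => i j; move: (XAQ i j); rewrite !mxE => /intr_inj.
Qed.

Lemma integral_mulmx n p (u : 'rV[rat]_n) (W : 'M[int]_(n, p)) :
  is_integral u -> is_integral (u *m mxQ W).
Proof.
move=> intu i; rewrite mxE; apply: rpred_sum => j _; rewrite mxE.
by apply: rpredM; [exact: intu | exact: intr_int].
Qed.

Lemma isom_form_mulmx n p1 p2 (B g : 'M[int]_n) (X1 : 'M_(p1, n)) (X2 : 'M_(p2, n)) :
  g *m B *m g^T = B -> (X1 *m g) *m B *m (X2 *m g)^T = X1 *m B *m X2^T.
Proof. by move=> gB; rewrite mulmx_trmx_form gB. Qed.

Lemma isom_N_restr n k (B : 'M[int]_n) (J : 'M[int]_(k, n)) (g : 'M[int]_n) f :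
  isom_L B g -> J *m g = J -> (forall x, inN B J x -> f x = x *m g) -> isom_N B J f.
Proof.
case=> gu gB Jg fE.
have inNg x : inN B J x -> inN B J (x *m g) by rewrite /inN -{2}Jg isom_form_mulmx.
split; first by move=> x xN; rewrite fE //; exact: inNg.
split.
  move=> x y xN yN; rewrite !fE ?mulmxDl //.
  by move: xN yN; rewrite /inN !mulmxDl => -> ->; rewrite addr0.
split; first by move=> x y xN yN; rewrite !fE // isom_form_mulmx.
move=> y yN; have ygN : inN B J (y *m invmx g).
  by rewrite /inN -(isom_form_mulmx _ _ gB) mulmxKV // Jg.
by exists (y *m invmx g); rewrite ?fE ?mulmxKV.
Qed.

Lemma Gamma_sub_isom_N n k (B : 'M[int]_n) (J : 'M[int]_(k, n)) G f :
  subgroup_OL B G -> Gamma B J G f -> isom_N B J f.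
Proof. by case=> GO _ [g [Gg [Jg fE]]]; exact: (isom_N_restr (GO g Gg) Jg fE). Qed.

Section Extension.
Variables (b k : nat) (B : 'M[int]_b) (C : 'M[int]_k) (J : 'M[int]_(k, b)).
Hypothesis Bsym : B^T = B.
Hypothesis JBJ : J *m B *m J^T = C.

(* [prM *m J / det C] and [prN / det C] are the orthogonal projections of L_Q
   onto j(M)_Q and onto N_Q. *)
Definition prM := B *m J^T *m \adj C.
Definition prN := (\det C)%:M - prM *m J.

Lemma J_prM : J *m prM = (\det C)%:M.
Proof. by rewrite /prM !mulmxA JBJ mul_mx_adj. Qed.

Lemma prN_perp : prN *m B *m J^T = 0.
Proof.
rewrite /prN /prM !mulmxBl mul_scalar_mx.
have -> : B *m J^T *m \adj C *m J *m B *m J^T = B *m J^T *m (\adj C *m (J *m B *m J^T)).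
  by rewrite !mulmxA.
by rewrite JBJ mul_adj_mx mul_mx_scalar -scalemxAl subrr.
Qed.

Lemma inN_prN x : inN B J (x *m prN).
Proof. by rewrite /inN -!mulmxA (mulmxA prN) prN_perp mulmx0. Qed.

Lemma inN0 : inN B J 0. Proof. by rewrite /inN !mul0mx. Qed.

Lemma inND x y : inN B J x -> inN B J y -> inN B J (x + y).
Proof. by rewrite /inN !mulmxDl => -> ->; rewrite addr0. Qed.

Lemma inNZ (a : int) x : inN B J x -> inN B J (a *: x).
Proof. by rewrite /inN -!scalemxAl => ->; rewrite scaler0. Qed.

Lemma inN_sum I (r : seq I) (F : I -> 'rV_b) :
  (forall i, inN B J (F i)) -> inN B J (\sum_(i <- r) F i).
Proof.
move=> FN; elim: r => [|i r IH]; first by rewrite big_nil; exact: inN0.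
by rewrite big_cons; apply: inND.
Qed.

Section IsomN.
Variable h : 'rV[int]_b -> 'rV[int]_b.
Hypothesis hN : isom_N B J h.

Lemma isomN0 : h 0 = 0.
Proof.
case: hN => _ [hD _]; have := hD 0 0 inN0 inN0.
by rewrite addr0 => /(congr1 (fun v => v - h 0)); rewrite subrr addrK => /esym.
Qed.

Lemma isomNN x : inN B J x -> h (- x) = - h x.
Proof.
case: hN => _ [hD _] xN; have NxN : inN B J (- x) by rewrite -scaleN1r; apply: inNZ.
by apply/eqP; rewrite -addr_eq0 addrC -hD // subrr isomN0.
Qed.

Lemma isomNZ (a : int) x : inN B J x -> h (a *: x) = a *: h x.
Proof.
case: hN => _ [hD _] xN.
suff hZn (n : nat) : h (n%:Z *: x) = n%:Z *: h x.
  case: a => n; first exact: hZn.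
  by rewrite NegzE !scaleNr isomNN ?hZn //; apply: inNZ.
elim: n => [|n IH]; first by rewrite !scale0r isomN0.
have -> : n.+1%:Z = n%:Z + 1 by rewrite -addn1 PoszD.
by rewrite !scalerDl !scale1r hD ?IH //; apply: inNZ.
Qed.

Lemma isomN_sum I (r : seq I) (F : I -> 'rV_b) :
  (forall i, inN B J (F i)) -> h (\sum_(i <- r) F i) = \sum_(i <- r) h (F i).
Proof.
case: hN => _ [hD _] FN; elim: r => [|i r IH]; first by rewrite !big_nil isomN0.
by rewrite !big_cons hD ?IH //; exact: inN_sum.
Qed.

Definition hmx := \matrix_(i < b) h (row i prN).

(* [extmx / det C] is the rational isometry of L that is the identity on
   j(M) and h on N. *)
Definition extmx := prM *m J + hmx.

Lemma hmxE x : h (x *m prN) = x *m hmx.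
Proof.
have rowN i : inN B J (row i prN) by rewrite rowE; apply: inN_prN.
rewrite mulmx_sum_row isomN_sum => [|i]; last exact: inNZ.
by rewrite [RHS]mulmx_sum_row; apply: eq_bigr => i _; rewrite isomNZ ?rowK.
Qed.

Lemma hmx_perp : hmx *m B *m J^T = 0.
Proof.
apply: eq_mx_mulrv => x; rewrite mulmx0 !mulmxA -hmxE.
by case: hN => hstable _; apply: hstable; exact: inN_prN.
Qed.

Lemma extmx_J : J *m extmx = \det C *: J.
Proof.
rewrite /extmx mulmxDr mulmxA J_prM mul_scalar_mx.
suff -> : J *m hmx = 0 by rewrite addr0.
apply/row_matrixP => i; rewrite row_mul row0 -hmxE -row_mul /prN mulmxBr mulmxA J_prM.
by rewrite mul_scalar_mx mul_mx_scalar subrr row0 isomN0.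
Qed.

Lemma extmx_N x : inN B J x -> x *m extmx = \det C *: h x.
Proof.
move=> xN; rewrite /extmx mulmxDr -hmxE /prN mulmxBr mul_mx_scalar.
have -> : x *m (prM *m J) = 0 by move: xN; rewrite /inN /prM !mulmxA => ->; rewrite !mul0mx.
by rewrite subr0 add0r isomNZ.
Qed.

Lemma extmx_form : extmx *m B *m extmx^T = (\det C ^+ 2) *: B.
Proof.
have BJT : (B *m J^T)^T = J *m B by rewrite trmx_mul trmxK Bsym.
have hmx_form : hmx *m B *m hmx^T = prN *m B *m prN^T.
  apply: eq_mx_bilin => x y; rewrite -!mulmx_trmx_form -!hmxE.
  by case: hN => _ [_ [hB _]]; rewrite hB //; exact: inN_prN.
have JBhmx : J *m B *m hmx^T = 0 by rewrite -BJT -trmx_mul mulmxA hmx_perp trmx0.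
have JBprN : J *m B *m prN^T = 0 by rewrite -BJT -trmx_mul mulmxA prN_perp trmx0.
have -> : (\det C ^+ 2) *: B = (prN + prM *m J) *m B *m (prN + prM *m J)^T.
  by rewrite subrK tr_scalar_mx mul_scalar_mx mul_mx_scalar scalerA expr2.
have formD (U V : 'M_b) : (U + V) *m B *m (U + V)^T =
    U *m B *m U^T + U *m B *m V^T + (V *m B *m U^T + V *m B *m V^T).
  by rewrite linearD /= !mulmxDl !mulmxDr addrA.
have formJr (U : 'M_b) : U *m B *m (prM *m J)^T = U *m B *m J^T *m prM^T.
  by rewrite trmx_mul !mulmxA.
have formJl (U : 'M_b) : prM *m J *m B *m U^T = prM *m (J *m B *m U^T).
  by rewrite !mulmxA.
rewrite /extmx addrC (formD hmx) (formD prN) !formJr hmx_perp prN_perp !formJl.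
by rewrite JBhmx JBprN !mulmx0 !mul0mx !(addr0, add0r) hmx_form.
Qed.

End IsomN.
End Extension.

Section CartanDieudonne.
Variables (n : nat) (B : 'M[int]_n).
Hypothesis Bsym : B^T = B.
Hypothesis Bunit : mxR B \in unitmx.

Definition bf (u v : 'rV[R]_n) : R := (u *m mxR B *m v^T) 0 0.

Lemma bfDl u u' v : bf (u + u') v = bf u v + bf u' v.
Proof. by rewrite /bf !mulmxDl mxE. Qed.
Lemma bfZl a u v : bf (a *: u) v = a * bf u v.
Proof. by rewrite /bf -!scalemxAl mxE. Qed.
Lemma bfNl u v : bf (- u) v = - bf u v.
Proof. by rewrite -scaleN1r bfZl mulN1r. Qed.
Lemma bfBl u u' v : bf (u - u') v = bf u v - bf u' v.
Proof. by rewrite bfDl bfNl. Qed.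
Lemma bf0l v : bf 0 v = 0.
Proof. by rewrite /bf !mul0mx mxE. Qed.
Lemma bf_suml I (r : seq I) (P : pred I) F v :
  bf (\sum_(i <- r | P i) F i) v = \sum_(i <- r | P i) bf (F i) v.
Proof. by rewrite /bf !mulmx_suml summxE. Qed.

Lemma bfC u v : bf u v = bf v u.
Proof.
rewrite /bf; have -> : (u *m mxR B *m v^T) 0 0 = ((u *m mxR B *m v^T)^T) 0 0.
  by rewrite [RHS]mxE.
by rewrite !trmx_mul trmxK -mxR_trmx Bsym mulmxA.
Qed.

Lemma bfDr u v v' : bf u (v + v') = bf u v + bf u v'.
Proof. by rewrite bfC bfDl !(bfC u). Qed.
Lemma bfZr a u v : bf u (a *: v) = a * bf u v.
Proof. by rewrite bfC bfZl bfC. Qed.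
Lemma bfBr u v v' : bf u (v - v') = bf u v - bf u v'.
Proof. by rewrite !(bfC u) bfBl. Qed.

Lemma qRE v : qR B v = bf v v. Proof. by []. Qed.

Definition isoR (g : 'M[R]_n) := forall u v, bf (u *m g) (v *m g) = bf u v.

Lemma isoR_mul g h : isoR g -> isoR h -> isoR (g *m h).
Proof. by move=> ig ih u v; rewrite !mulmxA ih ig. Qed.

Lemma reflmxE x v : x *m reflmx B v = x - (2 / qR B v * bf x v) *: v.
Proof.
rewrite /reflmx mulmxBr mulmx1 -scalemxAr !mulmxA.
by rewrite [x *m _ *m v^T]mx11_scalar mul_scalar_mx scalerA.
Qed.

Lemma reflmx_fix v x : bf x v = 0 -> x *m reflmx B v = x.
Proof. by move=> xv; rewrite reflmxE xv mulr0 scale0r subr0. Qed.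

Lemma reflmxK v : qR B v != 0 -> reflmx B v *m reflmx B v = 1%:M.
Proof.
move=> qv; apply: eq_mx_mulrv => x; rewrite mulmxA mulmx1 !reflmxE bfBl bfZl -qRE.
by apply/rowP => i; rewrite !mxE; field.
Qed.

Lemma isoR_reflmx v : qR B v != 0 -> isoR (reflmx B v).
Proof.
by move=> qv x y; rewrite !reflmxE !(bfBl, bfBr, bfZl, bfZr) -!qRE (bfC v y); field.
Qed.

Lemma refl_comp_cat s1 s2 : refl_comp B (s1 ++ s2) = refl_comp B s2 *m refl_comp B s1.
Proof. by elim: s1 => [|v s1 IH] /=; rewrite ?mulmx1 // IH mulmxA. Qed.

Lemma refl_comp_rev s : all (fun v => qR B v != 0) s ->
  refl_comp B s *m refl_comp B (rev s) = 1%:M.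
Proof.
elim: s => [|v s IH] /=; first by rewrite mulmx1.
move=> /andP[qv qs]; rewrite rev_cons -cats1 refl_comp_cat /= mul1mx.
by rewrite -mulmxA (mulmxA (reflmx B v)) reflmxK // mul1mx IH.
Qed.

Lemma isoR_refl_comp s : all (fun v => qR B v != 0) s -> isoR (refl_comp B s).
Proof.
elim: s => [_ u w|v s IH /andP[qv qs]] /=; first by rewrite !mulmx1.
by apply: isoR_mul; [exact: IH | exact: isoR_reflmx].
Qed.

Definition perpX (X : seq 'rV[R]_n) x := forall y, y \in X -> bf x y = 0.

Definition orthX (X : seq 'rV[R]_n) :=
  [/\ uniq X, (forall x y, x \in X -> y \in X -> x != y -> bf x y = 0)
    & (forall x, x \in X -> qR B x != 0)].

Lemma orthX_cons X x : orthX X -> qR B x != 0 -> perpX X x -> orthX (x :: X).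
Proof.
case=> uX oX qX qx xX; split.
- rewrite /= uX andbT; apply: contraNN qx => xinX.
  by rewrite qRE xX.
- move=> u v; rewrite !inE => /orP[/eqP->|uX'] /orP[/eqP->|vX']; rewrite ?eqxx //.
  + by move=> _; rewrite xX.
  + by move=> _; rewrite bfC xX.
  + exact: oX.
- by move=> u; rewrite inE => /orP[/eqP->|/qX].
Qed.

Lemma orthX_size X : orthX X -> (size X <= n)%N.
Proof.
case=> uX oX qX; have freeX : free X.
  apply/(@freeP _ _ _ (in_tuple X)) => k sum0 i.
  have := congr1 (fun u => bf u X`_i) sum0.
  rewrite bf0l bf_suml (bigD1 i) //= big1 ?addr0.
    rewrite bfZl -qRE => /eqP; rewrite mulf_eq0 (negPf (qX _ (mem_nth 0 (ltn_ord i)))).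
    by rewrite orbF => /eqP.
  move=> j ji; rewrite bfZl oX ?mulr0 ?mem_nth //.
  by rewrite nth_uniq.
move: freeX; rewrite /free => /eqP <-.
by have := dimvS (subvf <<X>>%VS); rewrite dimvf dim_matrix mul1r.
Qed.

(* If no anisotropic vector is orthogonal to X, the orthogonal complement of
   X is totally isotropic, hence zero by nondegeneracy; so X spans the space
   and g, fixing X, is the identity. *)
Lemma anisotropic_perpX_or_id X g : orthX X -> isoR g -> {in X, forall x, x *m g = x} ->
  (exists x, qR B x != 0 /\ perpX X x) \/ g = 1%:M.
Proof.
case=> uX oX qX ig gX; have [|maxX] := classic (exists x, qR B x != 0 /\ perpX X x).
  by left.
right.
have isoX x : perpX X x -> qR B x = 0.
  by move=> xX; apply/eqP; apply: contraT => qx; case: maxX; exists x.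
have perpD u u' : perpX X u -> perpX X u' -> perpX X (u + u').
  by move=> uX' u'X y yX; rewrite bfDl uX' ?u'X ?addr0.
have perp_bf u u' : perpX X u -> perpX X u' -> bf u u' = 0.
  move=> uX' u'X; have := isoX _ (perpD _ _ uX' u'X).
  rewrite qRE !(bfDl, bfDr) -!qRE !isoX // (bfC u' u) add0r addr0 => /eqP.
  by rewrite -mulr2n mulrn_eq0 /= => /eqP.
have perp_proj w : perpX X (w - \sum_(y <- X) (bf w y / qR B y) *: y).
  move=> y0 y0X; rewrite bfBl bf_suml (bigD1_seq y0) //= big1_seq.
    by rewrite addr0 bfZl -qRE mulfVK ?subrr // qX.
  by move=> y /andP[yy0 yX]; rewrite bfZl (oX y y0 yX y0X yy0) mulr0.
have perp_eq0 u : perpX X u -> u = 0.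
  move=> uX'; suff uB0 : u *m mxR B = 0 by rewrite -(mulmxK Bunit u) uB0 mul0mx.
  apply/rowP => j; rewrite [RHS]mxE.
  have -> : (u *m mxR B) 0 j = bf u (delta_mx 0 j).
    by rewrite /bf trmx_delta -colE [RHS]mxE.
  set w : 'rV_n := delta_mx 0 j.
  rewrite -(subrK (\sum_(y <- X) (bf w y / qR B y) *: y) w) bfDr.
  rewrite bfC perp_bf ?add0r // bfC bf_suml big1_seq // => y /andP[_ yX].
  by rewrite bfZl (bfC y u) uX' ?mulr0.
apply: eq_mx_mulrv => w; rewrite mulmx1; apply/eqP; rewrite -subr_eq0; apply/eqP.
by apply: perp_eq0 => y yX; rewrite bfBl -{1}(gX y yX) ig subrr.
Qed.

(* With y = xg - x and z = xg + x, q(y) + q(z) = 4 q(x) != 0; the reflection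
   in y (resp. in z followed by the one in x) sends xg back to x. *)
Lemma refl_comp_fix_cons X g x : isoR g -> {in X, forall w, w *m g = w} ->
  qR B x != 0 -> perpX X x ->
  exists vs, all (fun v => qR B v != 0) vs /\
    x *m (g *m refl_comp B vs) = x /\ {in X, forall w, w *m (g *m refl_comp B vs) = w}.
Proof.
move=> ig gX qx xX; set c := bf (x *m g) x.
have qxg : bf (x *m g) (x *m g) = qR B x by rewrite ig.
have wxg w : w \in X -> bf w (x *m g) = 0 by move=> wX; rewrite -{1}(gX w wX) ig bfC xX.
have wx w : w \in X -> bf w x = 0 by move=> wX; rewrite bfC xX.
pose y := x *m g - x; pose z := x *m g + x.
have qy : qR B y = 2 * qR B x - 2 * c.
  by rewrite qRE /y !(bfBl, bfBr) qxg -!qRE (bfC x (x *m g)) -/c; ring.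
have qz : qR B z = 2 * qR B x + 2 * c.
  by rewrite qRE /z !(bfDl, bfDr) qxg -!qRE (bfC x (x *m g)) -/c; ring.
have [qy0|qy0] := boolP (qR B y != 0).
  exists [:: y]; rewrite /= qy0 mul1mx; split=> //; split.
    rewrite mulmxA reflmxE.
    have -> : 2 / qR B y * bf (x *m g) y = 1.
      by move: qy0; rewrite qy /y bfBr qxg -/c => qy0; field.
    by rewrite scale1r /y opprB addrC subrK.
  by move=> w wX; rewrite mulmxA (gX w wX) reflmx_fix // /y bfBr wxg ?wx ?subrr.
have qz0 : qR B z != 0.
  apply: contraNN qx => /eqP qz0; move/negPn/eqP: qy0 => qy0.
  have -> : qR B x = (qR B y + qR B z) / 4 by rewrite qy qz; field.
  by rewrite qy0 qz0 addr0 mul0r.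
exists [:: x; z]; rewrite /= qz0 qx mul1mx; split=> //; split.
  rewrite !mulmxA [x *m g *m reflmx B z]reflmxE.
  have -> : 2 / qR B z * bf (x *m g) z = 1.
    by move: qz0; rewrite qz /z bfDr qxg -/c => qz0; field.
  rewrite scale1r /z opprD addrA subrr sub0r reflmxE bfNl -qRE.
  by apply/rowP => i; rewrite !mxE; field.
move=> w wX; rewrite !mulmxA (gX w wX) !reflmx_fix //.
all: first [by rewrite wx | by rewrite /z bfDr wxg ?wx ?addr0].
Qed.

Lemma cartan_dieudonne_rel k X g : (n - size X <= k)%N -> orthX X -> isoR g ->
  {in X, forall x, x *m g = x} ->
  exists vs, all (fun v => qR B v != 0) vs /\ refl_comp B vs = g.
Proof.
elim: k X g => [|k IH] X g sizeX oX ig gX.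
  have [[x [qx xX]]|->] := anisotropic_perpX_or_id oX ig gX; last by exists [::].
  move: sizeX; rewrite leqn0 subn_eq0.
  by move=> /(leq_trans (orthX_size (orthX_cons oX qx xX))); rewrite ltnn.
have [[x [qx xX]]|->] := anisotropic_perpX_or_id oX ig gX; last by exists [::].
have [vs0 [qvs0 [xfix Xfix]]] := refl_comp_fix_cons ig gX qx xX.
have [||||vs [qvs vsE]] := IH (x :: X) (g *m refl_comp B vs0).
- by rewrite /= subnS; move: sizeX; case: (n - size X)%N.
- exact: orthX_cons.
- by apply: isoR_mul => //; exact: isoR_refl_comp.
- by move=> u; rewrite inE => /orP[/eqP->|/Xfix].
exists (rev vs0 ++ vs); rewrite all_cat all_rev qvs0 qvs refl_comp_cat vsE -mulmxA.
by rewrite refl_comp_rev ?mulmx1.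
Qed.

Theorem cartan_dieudonne g : isoR g ->
  exists vs, all (fun v => qR B v != 0) vs /\ refl_comp B vs = g.
Proof. by move=> ig; apply: (@cartan_dieudonne_rel n [::]) => //; rewrite subn0. Qed.

Lemma spinor_norm_quot g vs1 vs2 :
  all (fun v => qR B v != 0) vs1 -> all (fun v => qR B v != 0) vs2 ->
  g *m refl_comp B vs1 = refl_comp B vs2 ->
  (0 < \prod_(v <- vs1) (- qR B v / 2)) = (0 < \prod_(v <- vs2) (- qR B v / 2)) ->
  exists vs, all (fun v => qR B v != 0) vs /\ refl_comp B vs = g /\
    0 < \prod_(v <- vs) (- qR B v / 2).
Proof.
move=> qvs1 qvs2 gE sign12; exists (rev vs1 ++ vs2); split; [|split].
- by rewrite all_cat all_rev qvs1.
- by rewrite refl_comp_cat -gE -mulmxA refl_comp_rev ?mulmx1.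
have prod_neq0 vs : all (fun v => qR B v != 0) vs -> \prod_(v <- vs) (- qR B v / 2) != 0.
  move=> qvs; rewrite prodf_seq_neq0; apply/allP => v /(allP qvs) qv /=.
  by rewrite mulf_neq0 ?oppr_eq0 ?invr_eq0 ?pnatr_eq0.
by rewrite big_cat big_rev mul_gt0_same_sign ?prod_neq0.
Qed.

End CartanDieudonne.

Lemma isoR_scaled n (B G : 'M[int]_n) (d : int) : d != 0 ->
  G *m B *m G^T = d ^+ 2 *: B -> isoR B ((d%:~R : R)^-1 *: mxR G).
Proof.
move=> d0 GB u v; rewrite /bf mulmx_trmx_form; congr (_ 0 0); congr (_ *m _ *m _).
have dR : (d%:~R : R) != 0 by rewrite intr_eq0.
rewrite linearZ /= -scalemxAl -scalemxAr -scalemxAl scalerA -mxR_trmx -!mxRM GB mxRZ.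
by rewrite scalerA rmorphXn /= -expr2 -exprMn mulVf // expr1n scale1r.
Qed.

Lemma det_sqr_of_form n (B G : 'M[int]_n) (d : int) : \det B != 0 ->
  G *m B *m G^T = d ^+ 2 *: B -> \det G ^+ 2 = (d ^+ n) ^+ 2.
Proof.
move=> dB0 /(congr1 determinant); rewrite !det_mulmx det_tr detZ => GBE.
apply: (mulIf dB0); rewrite -exprM mulnC exprM -GBE; ring.
Qed.

Lemma det_neq0_of_form n (B G : 'M[int]_n) (d : int) : \det B != 0 -> d != 0 ->
  G *m B *m G^T = d ^+ 2 *: B -> \det G != 0.
Proof.
move=> dB0 d0 GB; apply: contraNneq (expf_neq0 2 (expf_neq0 n d0)) => detG0.
by rewrite -(det_sqr_of_form dB0 GB) detG0 expr0n.
Qed.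

Section IntegralQuotient.
Variables (b k : nat) (B : 'M[int]_b) (J : 'M[int]_(k, b)) (D : int).
Hypotheses (dB0 : \det B != 0) (D0 : D != 0).
Variables G1 G2 Y : 'M[int]_b.
Hypotheses (G1B : G1 *m B *m G1^T = D ^+ 2 *: B) (G2B : G2 *m B *m G2^T = D ^+ 2 *: B).
Hypotheses (JG1 : J *m G1 = D *: J) (JG2 : J *m G2 = D *: J).
Hypothesis G2E : G2 = G1 + (D * \det B) ^+ 2 *: Y.

(* [G1 *m G1adj = c], so the quotient [G2 / G1] is [G2 *m G1adj / c]; it is
   integral because [G2 = G1] modulo [c * \det B]. *)
Let c := D ^+ 2 * \det B.
Let G1adj := B *m G1^T *m \adj B.

Definition quotmx := 1%:M + \det B *: (Y *m G1adj).

Let c0 : c != 0. Proof. by rewrite mulf_neq0 ?expf_neq0. Qed.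

Let G1_adj : G1 *m G1adj = c%:M.
Proof. by rewrite /G1adj !mulmxA G1B -scalemxAl mul_mx_adj scale_scalar_mx. Qed.

Let adj_G1 : G1adj *m G1 = c%:M.
Proof. exact: mulmx_scalarC_int c0 G1_adj. Qed.

Let scale_quotmx : c *: quotmx = G2 *m G1adj.
Proof.
rewrite /quotmx G2E mulmxDl G1_adj -scalemxAl scalerDr scalemx1 scalerA.
by congr (_ + _ *: _); rewrite /c; ring.
Qed.

Lemma quotmx_mul : quotmx *m G1 = G2.
Proof.
by apply: (scalemx_inj c0); rewrite scalemxAl scale_quotmx -mulmxA adj_G1 mul_mx_scalar.
Qed.

Lemma quotmx_J : J *m quotmx = J.
Proof.
apply: (scalemx_inj c0); rewrite scalemxAr scale_quotmx mulmxA JG2 -JG1 -mulmxA.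
by rewrite G1_adj mul_mx_scalar.
Qed.

Lemma quotmx_form : quotmx *m B *m quotmx^T = B.
Proof.
apply: (scalemx_inj (expf_neq0 2 D0)); rewrite -G2B -quotmx_mul.
have -> : quotmx *m G1 *m B *m (quotmx *m G1)^T = quotmx *m (G1 *m B *m G1^T) *m quotmx^T.
  by rewrite trmx_mul !mulmxA.
by rewrite G1B -scalemxAr -scalemxAl.
Qed.

Lemma det_quotmx : \det G1 = \det G2 -> \det quotmx = 1.
Proof.
move=> detG12; apply: (mulIf (det_neq0_of_form dB0 D0 G1B)).
by rewrite -det_mulmx quotmx_mul mul1r detG12.
Qed.

Lemma quotmx_disc : acts_trivially_on_disc B quotmx.
Proof.
move=> x xB; have -> : quotmx = 1%:M + B *m (\adj B *m (Y *m G1adj)).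
  by rewrite mulmxA mul_mx_adj mul_scalar_mx.
rewrite mxQD mxQ1 mulmxDr mulmx1 addrC addKr mxQM mulmxA.
exact: integral_mulmx.
Qed.

End IntegralQuotient.

Lemma In_mem (T : eqType) (x : T) (s : seq T) : x \in s -> List.In x s.
Proof. by elim: s => [|y s IH] //=; rewrite inE => /orP[/eqP->|/IH]; [left|right]. Qed.

Section FiniteIndex.
Variables (b k : nat) (B : 'M[int]_b) (C : 'M[int]_k) (J : 'M[int]_(k, b)).
Hypotheses (Bsym : B^T = B) (JBJ : J *m B *m J^T = C).
Hypotheses (dB0 : \det B != 0) (dC0 : \det C != 0).

Let D := \det C.
Let modulus := (D * \det B) ^+ 2.

Definition extR h : 'M[R]_b := (D%:~R : R)^-1 *: mxR (extmx B C J h).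

Definition extR_refl h := epsilon (inhabits [::])
  (fun vs => all (fun v => qR B v != 0) vs /\ refl_comp B vs = extR h).

Definition key h : {ffun 'I_b * 'I_b -> 'I_(absz modulus).+1} * bool * bool :=
  ([ffun ij => inord (absz (extmx B C J h ij.1 ij.2 %% modulus)%Z)],
   0 < \det (extmx B C J h), 0 < \prod_(v <- extR_refl h) (- qR B v / 2)).

Lemma extR_reflP h : isom_N B J h ->
  all (fun v => qR B v != 0) (extR_refl h) /\ refl_comp B (extR_refl h) = extR h.
Proof.
move=> hN; apply: (epsilon_spec (inhabits [::])
  (fun vs => all (fun v => qR B v != 0) vs /\ refl_comp B vs = extR h)).
apply: (cartan_dieudonne Bsym).
  by rewrite unitmxE unitfE /mxR det_map_mx /= intr_eq0.
exact: isoR_scaled dC0 (extmx_form Bsym JBJ hN).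
Qed.

Lemma key_modz h1 h2 : key h1 = key h2 ->
  forall i j, (extmx B C J h2 i j = extmx B C J h1 i j %[mod modulus])%Z.
Proof.
have modulus0 : modulus != 0 by rewrite expf_neq0 ?mulf_neq0.
have modulus_gt0 : 0 < modulus by rewrite lt_def modulus0 sqr_ge0.
have modz_bound z : (absz (z %% modulus)%Z < (absz modulus).+1)%N.
  rewrite ltnS -lez_nat !gez0_abs ?modz_ge0 ?ltW //.
  exact: ltz_pmod.
move=> [/ffunP keyE _ _] i j; move: (keyE (i, j)).
rewrite !ffunE /= => /(congr1 val); rewrite /= !inordK ?modz_bound // => modE.
by rewrite -(gez0_abs (modz_ge0 _ modulus0)) -modE gez0_abs // modz_ge0.
Qed.

Lemma same_key_coset h1 h2 : isom_N B J h1 -> isom_N B J h2 -> key h1 = key h2 ->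
  exists g, tildeSOplus B g /\ J *m g = J /\ forall x, inN B J x -> h2 x = h1 (x *m g).
Proof.
move=> h1N h2N keyE; have [Y GE] := mx_eqmodz (key_modz keyE).
have [_ detE spinE] := keyE.
set G1 := extmx B C J h1 in GE detE *; set G2 := extmx B C J h2 in GE detE *.
have G1B : G1 *m B *m G1^T = D ^+ 2 *: B := extmx_form Bsym JBJ h1N.
have G2B : G2 *m B *m G2^T = D ^+ 2 *: B := extmx_form Bsym JBJ h2N.
have JG1 : J *m G1 = D *: J := extmx_J JBJ h1N.
have JG2 : J *m G2 = D *: J := extmx_J JBJ h2N.
pose g := quotmx B G1 Y.
have gG1 : g *m G1 = G2 := quotmx_mul dB0 dC0 G1B GE.
have gB : g *m B *m g^T = B := quotmx_form dB0 dC0 G1B G2B GE.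
have detg : \det g = 1.
  apply: (det_quotmx dB0 dC0 G1B GE).
  apply: (eq_sqr_same_sign (det_neq0_of_form dB0 dC0 G1B) _ detE).
  by rewrite (det_sqr_of_form dB0 G1B) (det_sqr_of_form dB0 G2B).
have [q1 R1] := extR_reflP h1N; have [q2 R2] := extR_reflP h2N.
have spin : real_spinor_norm_one B g.
  apply: spinor_norm_quot q1 q2 _ spinE.
  by rewrite R1 R2 /extR -/G1 -/G2 -gG1 mxRM scalemxAr.
have gO : isom_L B g by split; [rewrite unitmxE detg unitr1 | exact: gB].
have Jg : J *m g = J := quotmx_J dB0 dC0 G1B JG1 JG2 GE.
exists g; split; last split=> //.
  by split=> //; split=> //; split; [exact: quotmx_disc | exact: spin].
move=> x xN; have xgN : inN B J (x *m g).
  by move: (isom_form_mulmx x J gB); rewrite Jg /inN => ->.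
apply: (scalemx_inj dC0); rewrite -(extmx_N JBJ h1N xgN) -(extmx_N JBJ h2N xN).
by rewrite -mulmxA gG1.
Qed.

Lemma isom_N_cosets (G : 'M[int]_b -> Prop) : (forall g, tildeSOplus B g -> G g) ->
  exists reps : seq ('rV[int]_b -> 'rV[int]_b),
    (forall r, List.In r reps -> isom_N B J r) /\
    forall h, isom_N B J h -> exists r, List.In r reps /\
      exists2 f, Gamma B J G f & forall x, inN B J x -> h x = r (f x).
Proof.
move=> SOG.
pose rep_for kk r :=
  isom_N B J r /\ (key r = kk \/ ~ exists h, isom_N B J h /\ key h = kk).
pose rep kk := epsilon (inhabits id) (rep_for kk).
have repP kk : rep_for kk (rep kk).
  apply: epsilon_spec; rewrite /rep_for.
  have [[h [hN hkey]]|nokey] := classic (exists h, isom_N B J h /\ key h = kk).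
    by exists h; split=> //; left.
  exists id; split; last by right.
  by split=> //; split=> //; split=> // y yN; exists y.
exists [seq rep kk | kk <- enum {: _}]; split.
  by move=> r /List.in_map_iff [kk [<- _]]; case: (repP kk).
move=> h hN; exists (rep (key h)); split.
  by apply: List.in_map; apply: In_mem; rewrite mem_enum.
have [repN [repkey|nokey]] := repP (key h); last by case: nokey; exists h.
have [g [SOg [Jg hE]]] := same_key_coset repN hN repkey.
by exists (fun x => x *m g) => //; exists g; split; [exact: SOG|].
Qed.

End FiniteIndex.

Theorem mainTheorem10 (b : nat) (B : 'M[int]_b) (Mo2 : 'M[int]_b -> Prop)
  (t : nat) (C : 'M[int]_(1 + t)) (J : 'M[int]_(1 + t, b)) :
  is_lattice_gram B -> even_gram B -> has_signature (mxR B) 3 (b - 3) ->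
  subgroup_OL B Mo2 ->
  is_lattice_gram C -> has_signature (mxR C) 1 t ->
  primitive_embedding C B J ->
  (forall g, tildeSOplus B g -> Mo2 g) ->
  arithmetic_subgroup_ON B J (Gamma B J Mo2).
Proof.
move=> Bsym _ sigB Mo2O _ sigC [JBJ _] SOMo2; split.
  by move=> f; apply: Gamma_sub_isom_N.
exact: isom_N_cosets Bsym JBJ (signature_det_neq0 sigB) (signature_det_neq0 sigC) _ SOMo2.
Qed.
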